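(* Let $q$ be a prime power, let $n \le m$ and $1 \le k \le n$ be integers, and let $\mathcal G(n,k)$ be a Gabidulin code of length $n$ and dimension $k$ over $\mathbb F_{q^m}$, with minimum rank distance $d = n-k+1$. Let $\tau$ be an integer with $0 \le \tau < d$. Then there exists a word $\mathbf r \in \mathbb F_{q^m}^n$ such that $$\ell \;\ge\; \left|\mathcal B_{\tau}(\mathbf r) \cap \mathcal G(n,k)\right| \;\ge\; \frac{\left[\begin{smallmatrix} n \\ n-\tau\end{smallmatrix}\right]_q}{(q^m)^{n-\tau-k}} \;\ge\; q^m\, q^{\tau(m+n) - \tau^2 - md},$$ where $\ell = \max_{\mathbf r' \in \mathbb F_{q^m}^n} |\mathcal B_\tau(\mathbf r') \cap \mathcal G(n,k)|$. In particular, for $n = m$: $\ell \ge q^n q^{2n\tau - \tau^2 - nd}$.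
   Context: For $x \in \mathbb F_{q^m}$ write $x^{[i]} = x^{q^i}$. A linearized polynomial over $\mathbb F_{q^m}$ is $f(x) = \sum_{i=0}^{d_f} f_i x^{[i]}$ with $f_i \in \mathbb F_{q^m}$; if $f_{d_f} \ne 0$, $d_f$ is its $q$-degree. A Gabidulin code $\mathcal G(n,k)$ of length $n \le m$ and dimension $k$ over $\mathbb F_{q^m}$ is the set $\{(f(\alpha_0), \dots, f(\alpha_{n-1})) : f \text{ linearized over } \mathbb F_{q^m},\ \deg_q f < k\}$, where $\alpha_0,\dots,\alpha_{n-1} \in \mathbb F_{q^m}$ are fixed and linearly independent over $\mathbb F_q$. Fixing a basis of $\mathbb F_{q^m}$ over $\mathbb F_q$, each vector $\mathbf x \in \mathbb F_{q^m}^n$ corresponds to a matrix $\mathbf X \in \mathbb F_q^{m \times n}$, and $\mathrm{rank}(\mathbf x)$ is the rank of $\mathbf X$ over $\mathbb F_q$; the rank distance between $\mathbf x,\mathbf y$ is $\mathrm{rank}(\mathbf x - \mathbf y)$. The minimum rank distance of the Gabidulin code is $d = n-k+1$. $\mathcal B_\tau(\mathbf a)$ denotes the set of $\mathbf x \in \mathbb F_{q^m}^n$ with $\mathrm{rank}(\mathbf x - \mathbf a) \le \tau$. The Gaussian binomial is $\left[\begin{smallmatrix} n \\ s\end{smallmatrix}\right]_q = \prod_{i=0}^{s-1} \frac{q^n - q^i}{q^s - q^i}$, the number of $s$-dimensional subspaces of an $n$-dimensional $\mathbb F_q$-vector space. *)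

From HB Require Import structures.
From mathcomp Require Import all_boot all_order all_algebra all_field.
Set Implicit Arguments. Unset Strict Implicit. Unset Printing Implicit Defensive.
Import Order.TTheory GRing.Theory Num.Theory.
Local Open Scope ring_scope.

(* Setting: F = F_q is a finite field (q = #|F|, a prime power),
   L = F_{q^m} is a finite extension of F with m = \dim {:L}.
   FL := finvect_type L is L with its canonical finite-type structure. *)
Notation FL L := (finvect_type L).

Section Gabidulin.
Variables (F : finFieldType) (L : fieldExtType F).

Definition frobq (x : L) (i : nat) : L := x ^+ (#|F| ^ i)%N.

Definition lin_eval (k : nat) (f : 'I_k -> L) (x : L) : L :=
  \sum_(i < k) f i * frobq x i.

Definition gabidulin (n k : nat) (alpha : 'I_n -> L) : {set 'rV[FL L]_n} :=
  [set (\row_(j < n) (lin_eval f (alpha j) : FL L)) | f : {ffun 'I_k -> FL L}].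

Definition vec_mat (n : nat) (x : 'rV[FL L]_n) : 'M[F]_(\dim {:L}, n) :=
  \matrix_(i, j) coord (vbasis {:L}) i (x 0 j : L).

Definition rank_vec (n : nat) (x : 'rV[FL L]_n) : nat := \rank (vec_mat x).

Definition rank_dist (n : nat) (x y : 'rV[FL L]_n) : nat := rank_vec (x - y).

Definition rank_ball (n tau : nat) (a : 'rV[FL L]_n) : {set 'rV[FL L]_n} :=
  [set x | (rank_dist x a <= tau)%N].

End Gabidulin.

Definition gauss_binom (q n s : nat) : rat :=
  \prod_(i < s) (((q ^ n)%N%:R - (q ^ i)%N%:R) / ((q ^ s)%N%:R - (q ^ i)%N%:R)).

From HB Require Import structures.
From mathcomp Require Import all_boot all_order all_algebra all_field.
From mathcomp Require Import zify ring.
Set Implicit Arguments. Unset Strict Implicit. Unset Printing Implicit Defensive.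
Import Order.TTheory GRing.Theory Num.Theory.
Local Open Scope ring_scope.

(* Put s := n - tau.  An s-dimensional F_q-subspace of the span of alpha is the
   set of roots of a unique monic linearized polynomial
   P = x^[s] + sum_(i < s) f_i x^[i], and since P is F_q-linear the word
   (P(alpha_j))_j has rank at most n - s = tau; there are [n, s]_q such P
   (counted as row-free s x n matrices modulo GL_s).  Grouping the P by
   their top coefficients f_k, ..., f_(s-1), some group has at least
   [n, s]_q / (q^m)^(s-k) members, and for P, P_0 in one group, P - P_0 has
   q-degree < k.  So the word of P_0 is within rank distance tau of that many
   codewords.  The last inequality is [n, s]_q >= q^(s(n-s)). *)

Lemma gauss_binom_ge (q n s : nat) : (1 < q)%N -> (s <= n)%N ->
  (q ^ (s * (n - s)))%N%:R <= gauss_binom q n s.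
Proof.
move=> q_gt1 le_sn.
rewrite /gauss_binom mulnC expnM natrX -[s in _ ^+ s]card_ord -prodr_const.
apply: ler_prod => i _; rewrite ler0n /=.
have lt_qi_qs : (q ^ i < q ^ s)%N by rewrite ltn_exp2l.
rewrite ler_pdivlMr ?subr_gt0 ?ltr_nat //.
rewrite -!natrB ?(ltnW lt_qi_qs) ?leq_exp2l ?(leq_trans (ltnW (ltn_ord i))) //.
rewrite -natrM ler_nat mulnBr -!expnD subnK //.
by rewrite leq_sub2l // leq_exp2l // leq_addl.
Qed.

Lemma gauss_binom_ratio_ge (q m n k tau : nat) : (1 < q)%N -> (tau + k <= n)%N ->
  (q ^ m)%N%:R * (q%:R ^ ((tau * (m + n))%N%:Z - (tau ^ 2)%N%:Z - (m * (n - k + 1))%N%:Z))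
    <= gauss_binom q n (n - tau) / ((q ^ m)%N%:R ^+ (n - tau - k)) :> rat.
Proof.
move=> q_gt1 le_tau_n.
have -> : (tau * (m + n))%N%:Z - (tau ^ 2)%N%:Z - (m * (n - k + 1))%N%:Z =
  (tau * (n - tau))%N%:Z - (m * (n - tau - k) + m)%N%:Z by nia.
have q_neq0 : (q%:R : rat) != 0 by rewrite pnatr_eq0 -lt0n ltnW.
rewrite expfzDr // -exprnP -exprnN !natrX exprD -exprM.
set Q := (q%:R : rat).
have -> : Q ^+ m * (Q ^+ (tau * (n - tau)) / (Q ^+ (m * (n - tau - k)) * Q ^+ m))
    = Q ^+ (tau * (n - tau)) / Q ^+ (m * (n - tau - k)).
  by field; rewrite ?expf_neq0.
apply: ler_wpM2r; first by rewrite invr_ge0 exprn_ge0 // exprn_ge0 // ler0n.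
rewrite -natrX mulnC.
have := @gauss_binom_ge q n (n - tau) q_gt1 (leq_subr tau n).
by rewrite subKn //; apply: leq_trans le_tau_n; rewrite leq_addr.
Qed.

Lemma row_free_col_mx (F : fieldType) m n (v : 'rV[F]_n) (A : 'M_(m, n)) :
  row_free (col_mx v A) = row_free A && ~~ (v <= A)%MS.
Proof.
have [fA | nfA] /= := boolP (row_free A); last first.
  apply/negbTE; apply: contra nfA => /eqP rvA.
  rewrite /row_free eqn_leq rank_leq_row -(leq_add2l 1) -[X in (X <= _)%N]rvA.
  by rewrite -addsmxE (leq_trans (mxrank_adds_leqif _ _)) // leq_add2r rank_leq_row.
rewrite /row_free eqn_leq rank_leq_row /= -(leq_add2r (\rank (v :&: A)%MS)).
rewrite -addsmxE mxrank_sum_cap (eqnP fA) addnAC leq_add2r.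
by rewrite (ltn_leqif (mxrank_leqif_sup _)) ?capmxSl // sub_capmx submx_refl.
Qed.

Section RowFreeCount.
Variable F : finFieldType.
Local Notation q := #|F|.

Lemma card_submx_row_free m n (A : 'M[F]_(m, n)) : row_free A ->
  #|[set v : 'rV_n | (v <= A)%MS]| = (q ^ m)%N.
Proof.
move=> fA; have -> : [set v : 'rV_n | (v <= A)%MS] = [set u *m A | u in 'rV_m].
  by apply/setP => v; rewrite inE; apply/submxP/imsetP => -[u]; exists u.
by rewrite card_imset ?card_mx ?mul1n //; apply: row_free_inj.
Qed.

Lemma card_row_free m n : (m <= n)%N ->
  #|[set A : 'M[F]_(m, n) | row_free A]| = (\prod_(i < m) (q ^ n - q ^ i))%N.
Proof.
elim: m => [_ | m IHm /ltnW le_mn].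
  rewrite big_ord0 -[1%N](expn0 q) -(mul0n n) -card_mx.
  by apply: eq_card => A; rewrite inE /row_free flatmx0 mxrank0.
rewrite big_ord_recr /= -{}IHm // -sum_nat_const -sum1_card -add1n.
rewrite (partition_big dsubmx (fun A => row_free A)) /= => [|C]; last first.
  by rewrite inE -{1}(vsubmxK C) row_free_col_mx => /andP[].
apply: eq_big => [A | A fA]; first by rewrite inE.
rewrite (reindex (col_mx^~ A)) /=; last first.
  exists usubmx => [v _ | C]; first by rewrite col_mxKu.
  by case/andP=> _ /eqP <-; rewrite vsubmxK.
rewrite -(card_submx_row_free fA) -[n in (q ^ n - _)%N]mul1n -card_mx.
rewrite -(cardsC [set v : 'rV_n | (v <= A)%MS]) addKn sum1_card.
apply: eq_card => v.
by rewrite unfold_in !inE col_mxKd eqxx andbT row_free_col_mx fA.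
Qed.

Lemma gauss_binom_card_row_free s n : (s <= n)%N -> gauss_binom q n s =
  #|[set A : 'M[F]_(s, n) | row_free A]|%:R / #|[set M : 'M[F]_s | row_free M]|%:R.
Proof.
move=> le_sn; rewrite /gauss_binom prodf_div !card_row_free // !natr_prod.
by congr (_ / _); apply: eq_bigr => i _; rewrite natrB // leq_exp2l ?finNzRing_gt1 //;
  apply: ltnW; rewrite ?(leq_trans (ltn_ord i)).
Qed.

End RowFreeCount.

Lemma pigeonhole_fiber (T U : finType) (S : {set T}) (h : T -> U) : (0 < #|U|)%N ->
  exists u, (#|S| <= #|U| * #|[set x in S | h x == u]|)%N.
Proof.
case/card_gt0P => u0 _.
have [u _ max_u] := @arg_maxnP U u0 predT (fun u => #|[set x in S | h x == u]|) isT.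
exists u; rewrite -sum1_card (partition_big h predT) //= -sum_nat_const.
apply: leq_sum => v _; rewrite (leq_trans _ (max_u v isT)) // sum1_card.
by apply: eq_leq; apply: eq_card => x; rewrite !inE.
Qed.

Section Linearized.
Variables (F : finFieldType) (L : fieldExtType F).
Local Notation q := #|F|.

Lemma pnat_pchar_card : [pchar L].-nat q.
Proof.
have [p p_pr pcharFp] := finPcharP F.
rewrite (eq_pnat _ (@pchar_lalg F L)) (eq_pnat _ (pcharf_eq pcharFp)).
by rewrite (card_pprimeChar pcharFp) pnatX pnat_id.
Qed.

Lemma frobqD (x y : L) i : frobq (x + y) i = frobq x i + frobq y i.
Proof. by rewrite /frobq exprDn_pchar // pnatX pnat_pchar_card. Qed.

Lemma frobqZ (a : F) (x : L) i : frobq (a *: x) i = a *: frobq x i.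
Proof.
suff expF (b : F) : b ^+ (q ^ i) = b by rewrite /frobq exprZn expF.
by elim: i => [|i IHi]; rewrite ?expr1 // expnS exprM expf_card IHi.
Qed.

Lemma lin_evalD t (g : 'I_t -> L) : {morph lin_eval g : x y / x + y}.
Proof. by move=> x y; rewrite -big_split; apply: eq_bigr => i _; rewrite frobqD mulrDr. Qed.

Lemma lin_evalZ t (g : 'I_t -> L) (a : F) x : lin_eval g (a *: x) = a *: lin_eval g x.
Proof. by rewrite /lin_eval scaler_sumr; apply: eq_bigr => i _; rewrite frobqZ scalerAr. Qed.

Lemma lin_eval0 t (g : 'I_t -> L) : lin_eval g 0 = 0.
Proof. by apply: (addrI (lin_eval g 0)); rewrite -lin_evalD !addr0. Qed.

Lemma lin_eval_comb t (g : 'I_t -> L) (I : finType) (c : I -> F) (b : I -> L) :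
  lin_eval g (\sum_i c i *: b i) = \sum_i c i *: lin_eval g (b i).
Proof.
rewrite (big_morph (lin_eval g) (lin_evalD g) (lin_eval0 g)).
by apply: eq_bigr => i _; rewrite lin_evalZ.
Qed.

Lemma lin_evalB t (g h : 'I_t -> L) x :
  lin_eval (fun i => g i - h i) x = lin_eval g x - lin_eval h x.
Proof. by rewrite /lin_eval -sumrB; apply: eq_bigr => i _; rewrite mulrBl. Qed.

Definition lin_indep (I : finType) (b : I -> L) :=
  forall c : I -> F, \sum_i c i *: b i = 0 -> forall i, c i = 0.

Lemma free_lin_indep n (alpha : 'I_n -> L) :
  free [seq alpha j | j <- enum 'I_n] -> lin_indep alpha.
Proof.
move=> free_alpha c c_alpha0 j.
have free_tuple : free (map_tuple alpha (ord_tuple n)) by [].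
apply: (freeP free_tuple c); rewrite -[RHS]c_alpha0; apply: eq_bigr => i _.
by rewrite (nth_map i) ?nth_ord_enum // size_enum_ord.
Qed.

Lemma lin_indep_comb_inj (I : finType) (b : I -> L) : lin_indep b ->
  injective (fun c : {ffun I -> F} => \sum_i c i *: b i).
Proof.
move=> indep_b c c' /= eq_cc'; apply/ffunP => i; apply/eqP; rewrite -subr_eq0.
apply/eqP; apply: (indep_b (fun i => c i - c' i)).
by under eq_bigr do rewrite scalerBl; rewrite sumrB eq_cc' subrr.
Qed.

(* The polynomial sum_i g_i X^(q^i) has degree less than q^t, yet it vanishes
   on all q^#|I| F-linear combinations of the b_i. *)
Lemma lin_eval_indep_eq0 t (I : finType) (g : 'I_t -> L) (b : I -> L) :
  (t <= #|I|)%N -> lin_indep b -> (forall i, lin_eval g (b i) = 0) ->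
  forall j, g j = 0.
Proof.
move=> le_tI indep_b gb0 j; apply/eqP/negPn/negP => gj_neq0.
have q_gt1 : (1 < q)%N := finNzRing_gt1 F.
pose P : {poly L} := \sum_(i < t) g i *: 'X^(q ^ i).
have PE x : P.[x] = lin_eval g x.
  by rewrite horner_sum; apply: eq_bigr => i _; rewrite hornerZ hornerXn.
have P_neq0 : P != 0.
  apply/eqP => /(congr1 (coefp (q ^ j))) /=.
  rewrite coef0 coef_sum (bigD1 j) //= coefZ coefXn eqxx mulr1 big1 ?addr0.
    by move=> gj0; rewrite gj0 eqxx in gj_neq0.
  move=> i ne_ij; rewrite coefZ coefXn eqn_exp2l // (inj_eq val_inj).
  by rewrite eq_sym (negbTE ne_ij) mulr0.
pose roots := [seq \sum_i c i *: b i | c : {ffun I -> F} <- enum {: {ffun I -> F}}].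
have := max_poly_roots (rs := roots) P_neq0.
have -> : all (root P) roots.
  apply/allP => _ /mapP[c _ ->]; rewrite /root PE lin_eval_comb.
  by rewrite big1 // => i _; rewrite gb0 scaler0.
rewrite /roots size_map -cardE card_ffun map_inj_uniq ?enum_uniq;
  last exact: lin_indep_comb_inj.
move=> /(_ isT isT); apply/negP; rewrite -leqNgt.
apply: (leq_trans (size_sum _ _ _)); apply/bigmax_leqP => i _.
apply: (leq_trans (size_scale_leq _ _)); rewrite size_polyXn.
by rewrite ltn_exp2l // (leq_trans (ltn_ord i)).
Qed.

Lemma card_finvect : #|FL L| = (q ^ \dim {:L})%N.
Proof. by rewrite -(card_vspacef (Vector.class (FL L))) card_vspace. Qed.

Lemma rank_vecN m (w : 'rV[FL L]_m) : rank_vec (- w) = rank_vec w.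
Proof.
rewrite /rank_vec -mxrank_opp; congr (\rank _); apply/matrixP => i j.
by rewrite !mxE linearN opprK.
Qed.

End Linearized.

Section GabidulinList.
Variables (F : finFieldType) (L : fieldExtType F) (n : nat) (alpha : 'I_n -> L).
Hypothesis alpha_indep : lin_indep alpha.

Definition comb (v : 'rV[F]_n) : L := \sum_j v 0 j *: alpha j.

Lemma comb_sum (I : finType) (c : I -> F) (v : I -> 'rV[F]_n) :
  comb (\sum_i c i *: v i) = \sum_i c i *: comb (v i).
Proof.
rewrite /comb; under eq_bigr do rewrite summxE scaler_suml.
rewrite exchange_big; apply: eq_bigr => i _; rewrite scaler_sumr.
by apply: eq_bigr => j _; rewrite mxE scalerA.
Qed.

Lemma comb_eq0 v : comb v = 0 -> v = 0.
Proof. by move=> v0; apply/rowP => j; rewrite mxE (alpha_indep v0). Qed.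

Lemma lin_indep_comb_row r (C : 'M[F]_(r, n)) : row_free C ->
  lin_indep (fun i => comb (row i C)).
Proof.
move=> fC c; rewrite -comb_sum => /comb_eq0 cC0 i.
have /eqP : (\row_i c i) *m C = 0.
  by rewrite mulmx_sum_row -{}[RHS]cC0; apply: eq_bigr => l _; rewrite mxE.
by rewrite mulmx_free_eq0 // => /eqP/rowP/(_ i); rewrite !mxE.
Qed.

Variable s : nat.

Definition moore (A : 'M[F]_(s, n)) : 'M[L]_s :=
  \matrix_(i, l) frobq (comb (row l A)) i.

(* The coefficients f of the monic linearized polynomial x^[s] + sum_(i < s) f_i x^[i]
   vanishing on the combinations of alpha given by the rows of A: the Moore system. *)
Definition ann_coef (A : 'M[F]_(s, n)) : 'rV[L]_s :=
  - (\row_l frobq (comb (row l A)) s) *m invmx (moore A).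

Definition monic_coef (f : 'rV[L]_s) (i : 'I_s.+1) : L :=
  if unlift ord_max i is Some j then f 0 j else 1.

Lemma lin_eval_monic (f : 'rV[L]_s) x :
  lin_eval (monic_coef f) x = lin_eval (f 0) x + frobq x s.
Proof.
rewrite /lin_eval big_ord_recr /monic_coef unlift_none mul1r; congr (_ + _).
apply: eq_bigr => i _.
have -> : widen_ord (leqnSn s) i = lift ord_max i.
  by apply: val_inj; rewrite /= /bump leqNgt ltn_ord.
by rewrite liftK lift_max.
Qed.

Lemma moore_unit (A : 'M[F]_(s, n)) : row_free A -> moore A \in unitmx.
Proof.
move=> fA; rewrite unitmxE unitfE; apply/negP => /det0P[v /negP v_neq0 vM0].
apply: v_neq0; apply/eqP/rowP => i; rewrite mxE.
apply: (lin_eval_indep_eq0 _ (lin_indep_comb_row fA)) => [|l]; first by rewrite card_ord.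
have := congr1 (fun w : 'rV_s => w 0 l) vM0; rewrite !mxE => <-.
by apply: eq_bigr => j _; rewrite mxE.
Qed.

Lemma ann_coefP (A : 'M[F]_(s, n)) : row_free A ->
  forall l, lin_eval (monic_coef (ann_coef A)) (comb (row l A)) = 0.
Proof.
move=> fA l; have : ann_coef A *m moore A = - \row_l frobq (comb (row l A)) s.
  by rewrite mulmxKV ?moore_unit.
move/(congr1 (fun w : 'rV_s => w 0 l)); rewrite !mxE lin_eval_monic => eq_l.
apply/eqP; rewrite -[frobq _ s]opprK -eq_l subr_eq0; apply/eqP/eq_bigr => j _.
by rewrite [moore A _ _]mxE.
Qed.

Lemma ann_coef_eq (A B : 'M[F]_(s, n)) : row_free A -> row_free B ->
  ann_coef A = ann_coef B -> exists2 M : 'M[F]_s, row_free M & B = M *m A.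
Proof.
move=> fA fB eq_AB.
suff /submxP[M defB] : (B <= A)%MS.
  exists M; rewrite // /row_free eqn_leq rank_leq_row.
  by rewrite -[X in (X <= _)%N](eqnP fB) defB mxrankM_maxl.
apply/row_subP => l; apply/negPn/negP => Bl_notin_A.
have fC : row_free (col_mx (row l B) A) by rewrite row_free_col_mx fA.
have := lin_eval_indep_eq0 (g := monic_coef (ann_coef A)) _ (lin_indep_comb_row fC).
rewrite card_ord => /(_ (leqnn _) _ ord_max); rewrite {2}/monic_coef unlift_none.
move=> one_eq0; have /eqP := oner_neq0 L; apply; apply: one_eq0 => i.
rewrite -(splitK i); case: (split i) => j /=; rewrite ?rowKu ?rowKd ?row_id.
  by rewrite eq_AB; apply: ann_coefP.
exact: ann_coefP.
Qed.

Definition ann_word (f : 'rV[L]_s) : 'rV[FL L]_n :=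
  \row_j (lin_eval (monic_coef f) (alpha j) : FL L).

(* The annihilator vanishes on the combinations of alpha given by the rows of A;
   by F-linearity this reads A *m W^T = 0 for the coordinate matrix W of the word. *)
Lemma rank_ann_word (A : 'M[F]_(s, n)) : row_free A ->
  (rank_vec (ann_word (ann_coef A)) <= n - s)%N.
Proof.
move=> fA.
have AW0 : A *m (vec_mat (ann_word (ann_coef A)))^T = 0.
  apply/matrixP => l i; rewrite !mxE -[RHS](linear0 (coord (vbasis fullv) i)).
  rewrite -(ann_coefP fA l) /comb lin_eval_comb linear_sum; apply: eq_bigr => j _.
  by rewrite linearZ /= !mxE.
have := mulmx0_rank_max AW0; rewrite mxrank_tr (eqnP fA) => le_rank.
rewrite /rank_vec leq_subRL ?(leq_trans (rank_leq_row A)) //.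
by rewrite (leq_trans _ le_rank) ?leq_addr.
Qed.

Variable k : nat.
Hypotheses (le_ks : (k <= s)%N) (le_sn : (s <= n)%N).

Definition ann_coefs : {set 'rV[FL L]_s} :=
  [set (ann_coef A : 'rV[FL L]_s) | A in [set A : 'M[F]_(s, n) | row_free A]].

Lemma card_row_free_le_ann_coefs :
  (#|[set A : 'M[F]_(s, n) | row_free A]| <=
     #|ann_coefs| * #|[set M : 'M[F]_s | row_free M]|)%N.
Proof.
rewrite -sum1_card.
rewrite (partition_big (fun A => ann_coef A : 'rV[FL L]_s) (mem ann_coefs)) /=;
  last by move=> A fA; apply: imset_f.
rewrite -sum_nat_const; apply: leq_sum => _ /imsetP[A0 fA0 ->]; rewrite sum1_card.
apply: (leq_trans _ (leq_imset_card (mulmx^~ A0) _)).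
apply/subset_leq_card/subsetP => A; rewrite unfold_in => /andP[fA /eqP eqA].
rewrite !inE in fA0 fA; have [M fM ->] := ann_coef_eq fA0 fA (esym eqA).
by apply: imset_f; rewrite inE.
Qed.

Lemma lt_add_sub_ord (i : 'I_(s - k)) : (k + i < s)%N.
Proof. by rewrite -ltn_subRL. Qed.

Definition hi_coef (f : 'rV[FL L]_s) : 'rV[FL L]_(s - k) :=
  \row_i f 0 (Ordinal (lt_add_sub_ord i)).
Definition hi_part (f : 'rV[L]_s) : 'rV[L]_s :=
  \row_i (if (k <= i)%N then f 0 i else 0).
Definition lo_coef (f : 'rV[L]_s) (i : 'I_k) : L := f 0 (widen_ord le_ks i).
Definition lo_word (f : 'rV[L]_s) : 'rV[FL L]_n :=
  \row_j (lin_eval (lo_coef f) (alpha j) : FL L).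

Lemma hi_coef_eq (f f' : 'rV[FL L]_s) : hi_coef f = hi_coef f' ->
  forall i : 'I_s, (k <= i)%N -> f 0 i = f' 0 i.
Proof.
move=> eq_ff' i le_ki.
have lt_i : (i - k < s - k)%N by rewrite ltn_sub2r // (leq_ltn_trans le_ki).
have /rowP/(_ (Ordinal lt_i)) := eq_ff'; rewrite !mxE.
suff -> : Ordinal (lt_add_sub_ord (Ordinal lt_i)) = i by [].
by apply: val_inj; rewrite /= subnKC.
Qed.

Lemma hi_part_eq (f f' : 'rV[FL L]_s) :
  hi_coef f = hi_coef f' -> hi_part f = hi_part f'.
Proof.
by move=> eq_hi; apply/rowP => i; rewrite !mxE; case: ifP => // /(hi_coef_eq eq_hi).
Qed.

Lemma lin_eval_monic_split (f : 'rV[L]_s) x : lin_eval (monic_coef f) x =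
  lin_eval (lo_coef f) x + lin_eval (monic_coef (hi_part f)) x.
Proof.
rewrite !lin_eval_monic addrA; congr (_ + _).
rewrite [lin_eval (f 0) x](bigID (fun i : 'I_s => (i < k)%N)) /=; congr (_ + _).
  by rewrite /lin_eval /lo_coef big_ord_narrow.
rewrite big_mkcond; apply: eq_bigr => i _.
by rewrite mxE -leqNgt; case: ifP; rewrite ?mul0r.
Qed.

Lemma opp_lo_word_gabidulin (f : 'rV[L]_s) : - lo_word f \in gabidulin k alpha.
Proof.
apply/imsetP; exists [ffun i => - lo_coef f i : FL L] => //.
apply/rowP => j; rewrite !mxE /lin_eval -sumrN; apply: eq_bigr => i _.
by rewrite ffunE mulNr.
Qed.

Lemma lo_word_inj (f f' : 'rV[FL L]_s) :
  hi_coef f = hi_coef f' -> lo_word f = lo_word f' -> f = f'.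
Proof.
move=> eq_hi eq_lo; apply/rowP => i; have [le_ki | lt_ik] := leqP k i.
  exact: hi_coef_eq.
have lo_eq0 j : lin_eval (fun i => lo_coef f i - lo_coef f' i) (alpha j) = 0.
  by rewrite lin_evalB; have /rowP/(_ j) := eq_lo; rewrite !mxE => ->; rewrite subrr.
have := lin_eval_indep_eq0 _ alpha_indep lo_eq0 (Ordinal lt_ik).
rewrite card_ord => /(_ (leq_trans le_ks le_sn))/eqP; rewrite subr_eq0 => /eqP.
by rewrite /lo_coef; congr (f 0 _ = f' 0 _); apply: val_inj.
Qed.

Lemma card_ann_coefs_le_ball : exists r : 'rV[FL L]_n,
  (#|ann_coefs| <= #|rank_ball (n - s) r :&: gabidulin k alpha| * #|FL L| ^ (s - k))%N.
Proof.
have /(pigeonhole_fiber ann_coefs hi_coef)[h le_fiber] :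
    (0 < #|{: 'rV[FL L]_(s - k)}|)%N.
  by apply/card_gt0P; exists 0.
rewrite card_mx mul1n mulnC in le_fiber.
have [fiber0 | [f0 f0_in]] := set_0Vmem [set f in ann_coefs | hi_coef f == h].
  by exists 0; rewrite (leq_trans le_fiber) // fiber0 cards0 mul0n.
exists (ann_word (hi_part f0)); apply: (leq_trans le_fiber).
rewrite leq_mul2r; apply/orP; right.
have lo_word_inj_fiber :
    {in [set f in ann_coefs | hi_coef f == h] &, injective (fun f => - lo_word f)}.
  move=> f f'; rewrite !inE => /andP[_ /eqP hf] /andP[_ /eqP hf'] /oppr_inj.
  by apply: lo_word_inj; rewrite hf hf'.
rewrite -(card_in_imset lo_word_inj_fiber).
apply/subset_leq_card/subsetP => _ /imsetP[f f_in ->].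
rewrite inE opp_lo_word_gabidulin andbT inE /rank_dist.
move: f0_in f_in; rewrite !inE => /andP[_ /eqP hf0] /andP[/imsetP[A fA ->] /eqP hA].
have -> : - lo_word (ann_coef A) - ann_word (hi_part f0) =
    - ann_word (ann_coef A).
  rewrite (hi_part_eq (f := f0) (f' := ann_coef A)) ?hf0 ?hA //.
  by apply/rowP => j; rewrite !mxE (lin_eval_monic_split (ann_coef A)) opprD.
by rewrite rank_vecN rank_ann_word //; rewrite inE in fA.
Qed.

Lemma exists_ball_gauss_binom_le : exists r : 'rV[FL L]_n,
  gauss_binom #|F| n s / ((#|F| ^ \dim {:L})%N%:R ^+ (s - k))
    <= #|rank_ball (n - s) r :&: gabidulin k alpha|%:R :> rat.
Proof.
have [r le_ball] := card_ann_coefs_le_ball; exists r.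
rewrite gauss_binom_card_row_free // -natrX -card_finvect.
have card_gt0 : (0 < #|FL L|)%N by apply/card_gt0P; exists 0.
have GL_gt0 : (0 < #|[set M : 'M[F]_s | row_free M]|)%N.
  by apply/card_gt0P; exists 1%:M; rewrite inE /row_free mxrank1.
rewrite !ler_pdivrMr ?ltr0n ?expn_gt0 ?card_gt0 //.
rewrite -!natrM ler_nat (leq_trans card_row_free_le_ann_coefs) // leq_mul2r.
by rewrite le_ball orbT.
Qed.

End GabidulinList.

Theorem theorem1 (F : finFieldType) (L : fieldExtType F)
  (n k tau : nat) (alpha : 'I_n -> L) :
  (n <= \dim {:L})%N ->
  (1 <= k)%N -> (k <= n)%N ->
  free [seq alpha j | j <- enum 'I_n] ->
  (tau < n - k + 1)%N ->
  let q := #|F| in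
  let m := \dim {:L} in
  let d := (n - k + 1)%N in
  let G := gabidulin k alpha in
  let ell := (\max_(r' : 'rV[FL L]_n) #|rank_ball tau r' :&: G|)%N in
  (exists r : 'rV[FL L]_n,
     [/\ (#|rank_ball tau r :&: G| <= ell)%N,
         gauss_binom q n (n - tau) / ((q ^ m)%N%:R ^+ (n - tau - k))
           <= (#|rank_ball tau r :&: G|)%:R :> rat
       & (q ^ m)%N%:R * (q%:R ^ ((tau * (m + n))%N%:Z - (tau ^ 2)%N%:Z - (m * d)%N%:Z))
           <= gauss_binom q n (n - tau) / ((q ^ m)%N%:R ^+ (n - tau - k)) :> rat])
  /\ (n = m ->
      (q ^ n)%N%:R * (q%:R ^ ((2 * n * tau)%N%:Z - (tau ^ 2)%N%:Z - (n * d)%N%:Z))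
        <= ell%:R :> rat).
Proof.
move=> _ _ le_kn /free_lin_indep alpha_indep lt_tau_d q m d G ell.
have le_tau_kn : (tau + k <= n)%N by lia.
have [|r le_r] :=
  exists_ball_gauss_binom_le alpha_indep (s := n - tau) (k := k) _ (leq_subr _ _).
  by lia.
rewrite subKn ?(leq_trans _ le_tau_kn) ?leq_addr // in le_r.
have le_ell : (#|rank_ball tau r :&: G| <= ell)%N.
  exact: (@leq_bigmax _ (fun r' => #|rank_ball tau r' :&: G|)).
split; first by exists r; split => //; apply: gauss_binom_ratio_ge (finNzRing_gt1 F) _.
move=> eq_nm; have := gauss_binom_ratio_ge n (finNzRing_gt1 F) le_tau_kn.
have -> : (tau * (n + n))%N = (2 * n * tau)%N by lia.
rewrite -/q -/d => ratio_ge; rewrite -/m -eq_nm in le_r.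
by rewrite (le_trans ratio_ge (le_trans le_r _)) // ler_nat.
Qed.
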